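(* Let $T$ be a triangle with maximum angle $\theta_M<\pi$, and let $e_1,e_2$ be the two edges of $T$ adjacent to the maximum angle, with unit tangent vectors $\mathbf t_{e_1},\mathbf t_{e_2}$. Then for every segment $e\subseteq T$ with unit direction vector $\mathbf t_e$, $$\|\mathbf v_h\cdot\mathbf t_e\|_{0,e}\lesssim(\sin\theta_M)^{-1/2}\sum_{i=1,2}\|\mathbf v_h\cdot\mathbf t_{e_i}\|_{0,e_i}\qquad\forall\mathbf v_h\in[\mathcal P_0(T)]^2.$$
   Context: $[\mathcal P_0(T)]^2$ denotes constant vector fields on $T$; $\|\cdot\|_{0,e}$ is the $L^2$ norm on the segment $e$. $A\lesssim B$ means $A\le CB$ with an absolute constant $C$. *)

From Stdlib Require Import Reals Lra.
From Coquelicot Require Import Coquelicot.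
Open Scope R_scope.

Definition pt : Type := (R * R)%type.
Definition vadd (u v : pt) : pt := (fst u + fst v, snd u + snd v).
Definition vsub (u v : pt) : pt := (fst u - fst v, snd u - snd v).
Definition vscale (c : R) (u : pt) : pt := (c * fst u, c * snd u).
Definition vdot (u v : pt) : R := fst u * fst v + snd u * snd v.
Definition vnorm (u : pt) : R := sqrt (vdot u u).
Definition unitv (u : pt) : pt := vscale (/ vnorm u) u.

Definition angle_at (X Y Z : pt) : R :=
  acos (vdot (vsub Y X) (vsub Z X) / (vnorm (vsub Y X) * vnorm (vsub Z X))).

Definition in_triangle (A B C x : pt) : Prop :=
  exists l1 l2 l3 : R, 0 <= l1 /\ 0 <= l2 /\ 0 <= l3 /\ l1 + l2 + l3 = 1 /\
    x = vadd (vscale l1 A) (vadd (vscale l2 B) (vscale l3 C)).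

(* L^2 norm on the segment [a,b] (arc-length measure) of f : R^2 -> R *)
Definition seg_L2 (f : pt -> R) (a b : pt) : R :=
  sqrt (RInt (fun s => (f (vadd a (vscale s (vsub b a))))^2 * vnorm (vsub b a)) 0 1).

From Stdlib Require Import Reals Lra Psatz.
From Coquelicot Require Import Coquelicot.
Open Scope R_scope.

(* Write b - a = x (Q - P) + y (R0 - P), where |x|, |y| <= 1 are differences of
   barycentric coordinates.  For a constant field the L2 norm on [a, b] is
   |v.(b - a)| / sqrt |b - a|, and |b - a| is at least its distance
   |x| |Q - P| sin θ_M to the line R (R0 - P).  As |x| <= 1 this yields
   |x| / sqrt |b - a| <= (sin θ_M |Q - P|)^(-1/2), and symmetrically for y, so
   the theorem holds with C = 1.  The angle hypotheses only serve to exclude a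
   degenerate triangle, for which sin θ_M = 0. *)

Definition cross (u w : pt) : R := fst u * snd w - snd u * fst w.
Definition vcos (u w : pt) : R := vdot u w / (vnorm u * vnorm w).
Definition vsin (u w : pt) : R := Rabs (cross u w) / (vnorm u * vnorm w).

Lemma angle_atE (X Y Z : pt) : angle_at X Y Z = acos (vcos (vsub Y X) (vsub Z X)).
Proof. reflexivity. Qed.

Lemma vdot_ge0 (u : pt) : 0 <= vdot u u.
Proof. destruct u as [u1 u2]; unfold vdot; simpl; nra. Qed.

Lemma vdot_gt0 (u : pt) : u <> (0, 0) -> 0 < vdot u u.
Proof.
  destruct u as [u1 u2]; unfold vdot; simpl; intro Hu.
  destruct (Req_dec u1 0) as [->|H1]; [destruct (Req_dec u2 0) as [->|H2]|]; [congruence|nra|nra].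
Qed.

Lemma vnorm_sqr (u : pt) : vnorm u * vnorm u = vdot u u.
Proof. apply sqrt_sqrt, vdot_ge0. Qed.

Lemma vnorm_gt0 (u : pt) : u <> (0, 0) -> 0 < vnorm u.
Proof. intro Hu; apply sqrt_lt_R0, vdot_gt0, Hu. Qed.

Lemma vsub_neq0 (a b : pt) : a <> b -> vsub b a <> (0, 0).
Proof.
  destruct a as [a1 a2], b as [b1 b2]; unfold vsub; simpl; intros Hab E.
  injection E; intros; apply Hab; f_equal; lra.
Qed.

Lemma vnorm_vsubC (a b : pt) : vnorm (vsub a b) = vnorm (vsub b a).
Proof. destruct a, b; unfold vnorm, vdot, vsub; simpl; f_equal; ring. Qed.

Lemma cross_neq0_l (u w : pt) : cross u w <> 0 -> u <> (0, 0).
Proof. intros H ->; apply H; unfold cross; simpl; ring. Qed.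

Lemma cross_neq0_r (u w : pt) : cross u w <> 0 -> w <> (0, 0).
Proof. intros H ->; apply H; unfold cross; simpl; ring. Qed.

Lemma lagrange_identity (u w : pt) :
  vdot u u * vdot w w = vdot u w ^ 2 + cross u w ^ 2.
Proof. destruct u, w; unfold vdot, cross; simpl; ring. Qed.

Lemma sqrt_vdot_mul (u w : pt) : sqrt (vdot u u * vdot w w) = vnorm u * vnorm w.
Proof. apply sqrt_mult_alt, vdot_ge0. Qed.

Lemma Rabs_cross_le (u w : pt) : Rabs (cross u w) <= vnorm u * vnorm w.
Proof.
  rewrite <- sqrt_Rsqr_abs, <- sqrt_vdot_mul.
  apply sqrt_le_1_alt; rewrite lagrange_identity; unfold Rsqr; nra.
Qed.

Lemma vcos2_vsin2 (u w : pt) : u <> (0, 0) -> w <> (0, 0) ->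
  vcos u w ^ 2 + vsin u w ^ 2 = 1.
Proof.
  intros Hu Hw; unfold vcos, vsin.
  pose proof (vnorm_gt0 u Hu); pose proof (vnorm_gt0 w Hw).
  field_simplify_eq; [|lra].
  rewrite pow2_abs, <- lagrange_identity, <- !vnorm_sqr; ring.
Qed.

Lemma vcos_bound (u w : pt) : u <> (0, 0) -> w <> (0, 0) -> -1 <= vcos u w <= 1.
Proof. intros Hu Hw; pose proof (vcos2_vsin2 u w Hu Hw); nra. Qed.

Lemma sin_acos_vcos (u w : pt) : u <> (0, 0) -> w <> (0, 0) ->
  sin (acos (vcos u w)) = vsin u w.
Proof.
  intros Hu Hw.
  rewrite sin_acos by (apply vcos_bound; assumption).
  replace (1 - (vcos u w)²) with (vsin u w ^ 2)
    by (pose proof (vcos2_vsin2 u w Hu Hw); unfold Rsqr; lra).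
  apply sqrt_pow2; unfold vsin.
  pose proof (vnorm_gt0 u Hu); pose proof (vnorm_gt0 w Hw).
  apply Rdiv_le_0_compat; [apply Rabs_pos | nra].
Qed.

Lemma vcos_cross_eq0 (u w : pt) : u <> (0, 0) -> w <> (0, 0) -> cross u w = 0 ->
  vcos u w = 1 \/ vcos u w = -1.
Proof.
  intros Hu Hw H0; pose proof (vcos2_vsin2 u w Hu Hw) as E.
  unfold vsin in E; rewrite H0, Rabs_R0 in E; unfold Rdiv in E; nra.
Qed.

Lemma acos_eq0 (x : R) : -1 <= x <= 1 -> acos x = 0 -> x = 1.
Proof. intros H E; rewrite <- (cos_acos x H), E; apply cos_0. Qed.

Lemma vcos_eq1 (u w : pt) : u <> (0, 0) -> w <> (0, 0) -> vcos u w = 1 ->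
  vdot u w = vnorm u * vnorm w.
Proof.
  intros Hu Hw E.
  pose proof (vnorm_gt0 u Hu); pose proof (vnorm_gt0 w Hw).
  rewrite <- (Rmult_1_l (vnorm u * vnorm w)), <- E; unfold vcos; field; lra.
Qed.

(* Three zero angles would force |QR| = |PQ| + |PR| (from the angles at Q and R0)
   and |QR| = | |PQ| - |PR| | (from the angle at P). *)
Lemma no_flat_triangle (P Q R0 : pt) : P <> Q -> P <> R0 -> Q <> R0 ->
  vdot (vsub Q P) (vsub R0 P) = vnorm (vsub Q P) * vnorm (vsub R0 P) ->
  vdot (vsub P Q) (vsub R0 Q) = vnorm (vsub P Q) * vnorm (vsub R0 Q) ->
  vdot (vsub P R0) (vsub Q R0) = vnorm (vsub P R0) * vnorm (vsub Q R0) ->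
  False.
Proof.
  intros HPQ HPR HQR EP EQ ER.
  rewrite (vnorm_vsubC P Q) in EQ; rewrite (vnorm_vsubC P R0), (vnorm_vsubC Q R0) in ER.
  pose proof (vnorm_gt0 _ (vsub_neq0 _ _ HPQ)) as HA.
  pose proof (vnorm_gt0 _ (vsub_neq0 _ _ HPR)) as HB.
  pose proof (vnorm_gt0 _ (vsub_neq0 _ _ HQR)) as HD.
  pose proof (vnorm_sqr (vsub Q P)) as SA.
  pose proof (vnorm_sqr (vsub R0 P)) as SB.
  pose proof (vnorm_sqr (vsub R0 Q)) as SD.
  set (A := vnorm (vsub Q P)) in *; set (B := vnorm (vsub R0 P)) in *;
    set (D := vnorm (vsub R0 Q)) in *.
  assert (Hsum : D * D = (A + B) * D).
  { rewrite SD; transitivity (vdot (vsub P Q) (vsub R0 Q) + vdot (vsub P R0) (vsub Q R0)).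
    - destruct P, Q, R0; unfold vdot, vsub; simpl; ring.
    - rewrite EQ, ER; ring. }
  assert (Hdiff : D * D = (A - B) * (A - B)).
  { rewrite SD; transitivity (vdot (vsub Q P) (vsub Q P) + vdot (vsub R0 P) (vsub R0 P)
                               - 2 * vdot (vsub Q P) (vsub R0 P)).
    - destruct P, Q, R0; unfold vdot, vsub; simpl; ring.
    - rewrite <- SA, <- SB, EP; ring. }
  assert (D = A + B) by nra.
  nra.
Qed.

Lemma acos_m1 : acos (-1) = PI.
Proof. rewrite <- cos_PI; apply acos_cos; pose proof PI_RGT_0; lra. Qed.

Lemma vcos_eq1_of_angle_le0 (X Y Z : pt) : X <> Y -> X <> Z ->
  angle_at X Y Z <= 0 ->
  vdot (vsub Y X) (vsub Z X) = vnorm (vsub Y X) * vnorm (vsub Z X).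
Proof.
  intros HXY HXZ H; rewrite angle_atE in H.
  pose proof (vsub_neq0 _ _ HXY); pose proof (vsub_neq0 _ _ HXZ).
  apply vcos_eq1, acos_eq0; try apply vcos_bound; try assumption.
  pose proof (acos_bound (vcos (vsub Y X) (vsub Z X))); lra.
Qed.

Lemma max_angle_cross_neq0 (P Q R0 : pt) : P <> Q -> P <> R0 -> Q <> R0 ->
  angle_at Q P R0 <= angle_at P Q R0 -> angle_at R0 P Q <= angle_at P Q R0 ->
  angle_at P Q R0 < PI ->
  cross (vsub Q P) (vsub R0 P) <> 0.
Proof.
  intros HPQ HPR HQR HQ HR Hlt H0.
  pose proof (vsub_neq0 _ _ HPQ) as Hu; pose proof (vsub_neq0 _ _ HPR) as Hw.
  destruct (vcos_cross_eq0 _ _ Hu Hw H0) as [E|E];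
    rewrite (angle_atE P Q R0), E in HQ, HR, Hlt.
  - rewrite acos_1 in HQ, HR.
    apply (no_flat_triangle P Q R0 HPQ HPR HQR).
    + apply vcos_eq1; assumption.
    + apply vcos_eq1_of_angle_le0; [congruence | assumption | assumption].
    + apply vcos_eq1_of_angle_le0; [congruence | congruence | assumption].
  - rewrite acos_m1 in Hlt; lra.
Qed.

Lemma cross_combination_l (x y : R) (u w : pt) :
  cross (vadd (vscale x u) (vscale y w)) w = x * cross u w.
Proof. destruct u, w; unfold cross, vadd, vscale; simpl; ring. Qed.

Lemma vsin_sym (u w : pt) : vsin w u = vsin u w.
Proof.
  unfold vsin; rewrite Rmult_comm; f_equal.
  rewrite <- Rabs_Ropp; f_equal; unfold cross; ring.
Qed.

Lemma vsin_gt0 (u w : pt) : cross u w <> 0 -> 0 < vsin u w.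
Proof.
  intro H; pose proof (vnorm_gt0 u (cross_neq0_l u w H));
    pose proof (vnorm_gt0 w (cross_neq0_r u w H)).
  apply Rdiv_lt_0_compat; [apply Rabs_pos_lt, H | nra].
Qed.

Lemma vnorm_combination_ge (x y : R) (u w : pt) : cross u w <> 0 ->
  vsin u w * vnorm u * Rabs x <= vnorm (vadd (vscale x u) (vscale y w)).
Proof.
  intro H; pose proof (vnorm_gt0 u (cross_neq0_l u w H)) as Hu;
    pose proof (vnorm_gt0 w (cross_neq0_r u w H)) as Hw.
  apply Rmult_le_reg_r with (vnorm w); [exact Hw|].
  replace (vsin u w * vnorm u * Rabs x * vnorm w) with (Rabs (x * cross u w))
    by (unfold vsin; rewrite Rabs_mult; field; lra).
  rewrite <- cross_combination_l with (y := y); apply Rabs_cross_le.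
Qed.

Lemma Rabs_div_sqrt_le (x m D : R) : 0 < m -> 0 < D -> Rabs x <= 1 ->
  m * Rabs x <= D -> Rabs x / sqrt D <= / sqrt m.
Proof.
  intros Hm HD Hx H.
  rewrite <- (sqrt_Rsqr_abs x), <- sqrt_div_alt, <- sqrt_inv by exact HD.
  apply sqrt_le_1_alt; unfold Rsqr.
  apply Rmult_le_reg_r with (m * D); [nra|].
  replace (x * x / D * (m * D)) with (m * (x * x)) by (field; lra).
  replace (/ m * (m * D)) with D by (field; lra).
  assert (x * x <= Rabs x)
    by (pose proof (Rsqr_abs x); pose proof (Rabs_pos x); unfold Rsqr in *; nra).
  nra.
Qed.

Lemma combination_coef_bound (x y : R) (u w : pt) :
  cross u w <> 0 -> Rabs x <= 1 -> vadd (vscale x u) (vscale y w) <> (0, 0) ->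
  Rabs x / sqrt (vnorm (vadd (vscale x u) (vscale y w)))
  <= / sqrt (vsin u w) * / sqrt (vnorm u).
Proof.
  intros H Hx Hd.
  pose proof (vsin_gt0 u w H); pose proof (vnorm_gt0 u (cross_neq0_l u w H)).
  rewrite <- Rinv_mult, <- sqrt_mult by lra.
  apply Rabs_div_sqrt_le; [nra | apply vnorm_gt0, Hd | exact Hx |].
  apply vnorm_combination_ge, H.
Qed.

Lemma vdot_combination_bound (x y : R) (u w v : pt) :
  cross u w <> 0 -> Rabs x <= 1 -> Rabs y <= 1 ->
  vadd (vscale x u) (vscale y w) <> (0, 0) ->
  Rabs (vdot v (vadd (vscale x u) (vscale y w)))
    / sqrt (vnorm (vadd (vscale x u) (vscale y w)))
  <= / sqrt (vsin u w)
     * (Rabs (vdot v u) / sqrt (vnorm u) + Rabs (vdot v w) / sqrt (vnorm w)).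
Proof.
  intros H Hx Hy Hd.
  assert (Hswap : vadd (vscale x u) (vscale y w) = vadd (vscale y w) (vscale x u))
    by (unfold vadd; f_equal; ring).
  assert (H' : cross w u <> 0) by (unfold cross in *; lra).
  pose proof (combination_coef_bound x y u w H Hx Hd) as Bx.
  pose proof (combination_coef_bound y x w u H' Hy) as By.
  rewrite <- Hswap, vsin_sym in By; specialize (By Hd).
  set (d := vadd (vscale x u) (vscale y w)) in *.
  assert (Edot : vdot v d = x * vdot v u + y * vdot v w)
    by (unfold d; destruct u, w, v; unfold vdot, vadd, vscale; simpl; ring).
  pose proof (sqrt_lt_R0 _ (vnorm_gt0 d Hd)).
  apply Rle_trans with ((Rabs x / sqrt (vnorm d)) * Rabs (vdot v u)
                        + (Rabs y / sqrt (vnorm d)) * Rabs (vdot v w)).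
  - rewrite Edot; unfold Rdiv.
    replace (Rabs x * / sqrt (vnorm d) * Rabs (vdot v u)
             + Rabs y * / sqrt (vnorm d) * Rabs (vdot v w))
      with ((Rabs (x * vdot v u) + Rabs (y * vdot v w)) * / sqrt (vnorm d))
      by (rewrite !Rabs_mult; ring).
    apply Rmult_le_compat_r; [apply Rlt_le, Rinv_0_lt_compat; assumption | apply Rabs_triang].
  - assert (Hu : 0 <= Rabs (vdot v u)) by apply Rabs_pos.
    assert (Hw : 0 <= Rabs (vdot v w)) by apply Rabs_pos.
    unfold Rdiv at 3 4; nra.
Qed.

Lemma seg_L2_const (k : R) (a b : pt) :
  seg_L2 (fun _ => k) a b = Rabs k * sqrt (vnorm (vsub b a)).
Proof.
  unfold seg_L2; rewrite RInt_const; unfold scal; simpl; unfold mult; simpl.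
  rewrite Rminus_0_r, Rmult_1_l, sqrt_mult_alt, <- sqrt_Rsqr_abs by nra.
  unfold Rsqr; f_equal; f_equal; ring.
Qed.

Lemma seg_L2_tangential (v a b : pt) : a <> b ->
  seg_L2 (fun _ => vdot v (unitv (vsub b a))) a b
  = Rabs (vdot v (vsub b a)) / sqrt (vnorm (vsub b a)).
Proof.
  intro Hab; rewrite seg_L2_const.
  pose proof (vnorm_gt0 _ (vsub_neq0 _ _ Hab)) as HN.
  pose proof (sqrt_lt_R0 _ HN) as HsN; pose proof (sqrt_sqrt _ (Rlt_le _ _ HN)) as EN.
  set (N := vnorm (vsub b a)) in *.
  replace (vdot v (unitv (vsub b a))) with (vdot v (vsub b a) * / N)
    by (destruct v, (vsub b a); unfold vdot, unitv, vscale, N; simpl; ring).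
  rewrite Rabs_mult, Rabs_inv, (Rabs_pos_eq N) by lra.
  rewrite <- EN at 1; field; lra.
Qed.

Lemma in_triangle_vsub (P Q R0 a b : pt) :
  in_triangle P Q R0 a -> in_triangle P Q R0 b ->
  exists x y : R, Rabs x <= 1 /\ Rabs y <= 1 /\
    vsub b a = vadd (vscale x (vsub Q P)) (vscale y (vsub R0 P)).
Proof.
  intros (l1 & l2 & l3 & H1 & H2 & H3 & Hl & ->) (m1 & m2 & m3 & K1 & K2 & K3 & Km & ->).
  exists (m2 - l2), (m3 - l3); split; [|split]; try (apply Rabs_le; lra).
  destruct P, Q, R0; unfold vsub, vadd, vscale; simpl.
  replace l1 with (1 - l2 - l3) by lra; replace m1 with (1 - m2 - m3) by lra.
  f_equal; ring.
Qed.

Theorem lemmaC3 :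
  exists C : R, 0 < C /\
  forall P Q R0 : pt,
    P <> Q -> P <> R0 -> Q <> R0 ->
    angle_at Q P R0 <= angle_at P Q R0 ->
    angle_at R0 P Q <= angle_at P Q R0 ->
    angle_at P Q R0 < PI ->
    forall a b : pt,
      in_triangle P Q R0 a -> in_triangle P Q R0 b -> a <> b ->
      forall v : pt,
        seg_L2 (fun _ => vdot v (unitv (vsub b a))) a b
        <= C * / sqrt (sin (angle_at P Q R0)) *
           (seg_L2 (fun _ => vdot v (unitv (vsub Q P))) P Q
            + seg_L2 (fun _ => vdot v (unitv (vsub R0 P))) P R0).
Proof.
  exists 1; split; [lra|].
  intros P Q R0 HPQ HPR HQR HQ HR Hlt a b Ha Hb Hab v.
  pose proof (max_angle_cross_neq0 P Q R0 HPQ HPR HQR HQ HR Hlt) as Hcross.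
  destruct (in_triangle_vsub P Q R0 a b Ha Hb) as (x & y & Hx & Hy & Hd).
  rewrite !seg_L2_tangential by assumption.
  rewrite angle_atE, sin_acos_vcos, Rmult_1_l by (apply vsub_neq0; assumption).
  rewrite Hd; apply vdot_combination_bound; try assumption.
  rewrite <- Hd; apply vsub_neq0, Hab.
Qed.
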